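(* For every $v\equiv 0 \pmod 6$ with $v\ge 18$, there exists a $2$-split decomposition of $K_v^{(3)}-I$ into tight $9$-cycles.
   Context: $K_v^{(3)}$ denotes the complete $3$-uniform hypergraph on $v$ vertices; for $3\mid v$, $K_v^{(3)}-I$ is obtained by deleting the edges of a $1$-factor $I$ (a set of $v/3$ pairwise disjoint triples covering all vertices). A (3-uniform tight) $k$-cycle is given by a cyclic sequence $v_1,\dots,v_k$ of $k$ distinct vertices, its edges being the triples $\{v_i,v_{i+1},v_{i+2}\}$ ($i=1,\dots,k$, indices mod $k$). A decomposition is a collection of cycles whose edge sets partition the edge set. For even $v$ with $3\mid v/2$, a $2$-split decomposition of $K_v^{(3)}-I$ into $k$-cycles is one where the vertex set is partitioned into two sets $V_1,V_2$ of size $v/2$, the $1$-factor is $I=I_1\cup I_2$ with $I_j$ a $1$-factor of $V_j$, and the collection of cycles consists of a $k$-cycle decomposition of $K^{(3)}[V_1]-I_1$, a $k$-cycle decomposition of $K^{(3)}[V_2]-I_2$, and a $k$-cycle decomposition of the hypergraph of all triples meeting both $V_1$ and $V_2$. *)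

From mathcomp Require Import all_boot.
Set Implicit Arguments. Unset Strict Implicit. Unset Printing Implicit Defensive.

Section Hyper.
Variable T : finType.

Definition complete3 (V : {set T}) : {set {set T}} :=
  [set e : {set T} | (e \subset V) && (#|e| == 3)].

Definition one_factor (V : {set T}) (I : {set {set T}}) : Prop :=
  partition I V /\ (forall t, t \in I -> #|t| = 3).

Definition cross3 (V1 V2 : {set T}) : {set {set T}} :=
  [set e : {set T} | [&& #|e| == 3, e :&: V1 != set0 & e :&: V2 != set0]].

Definition cyc_edges k (c : k.-tuple T) : {set {set T}} :=
  [set [set tnth c i; tnth c (ordS i); tnth c (ordS (ordS i))] | i : 'I_k].

Definition cycle_decomp k (H : {set {set T}}) (cs : seq (k.-tuple T)) : Prop :=
  (forall c, c \in cs -> uniq c /\ cyc_edges c \subset H) /\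
  (forall e, e \in H -> count (fun c => e \in cyc_edges c) cs = 1).

End Hyper.

Definition two_split_decomp (v k : nat) : Prop :=
  exists (V1 V2 : {set 'I_v}) (I1 I2 : {set {set 'I_v}})
         (cs1 cs2 cs12 : seq (k.-tuple 'I_v)),
    [/\ [/\ V1 :&: V2 = set0, V1 :|: V2 = setT, #|V1| = v %/ 2 & #|V2| = v %/ 2],
        one_factor V1 I1, one_factor V2 I2 &
        [/\ cycle_decomp (complete3 V1 :\: I1) cs1,
            cycle_decomp (complete3 V2 :\: I2) cs2 &
            cycle_decomp (cross3 V1 V2) cs12]].

From HB Require Import structures.
From mathcomp Require Import all_boot zify.
Set Implicit Arguments. Unset Strict Implicit. Unset Printing Implicit Defensive.

(* Write v = 6m and cut the vertices into 2m blocks of three consecutive vertices;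
   the blocks form the 1-factor, and V1, V2 are the first and the last m blocks.
   Up to the positions of its vertices inside their blocks, an edge is a sorted
   triple b1 <= b2 <= b3 of blocks, not all equal.  Each half is partitioned into
   groups of 3, 4 or 5 consecutive blocks, and the groups into cells of 2 or 3
   blocks.  A block triple is owned by its group if it lies in one; otherwise by
   the two cells of b1 and b3 if b2 lies in one of them; otherwise by itself.  The
   edges with a given owner form a copy of one of eight small hypergraphs: K - I
   on 3, 4 or 5 blocks, the triples meeting both of two sets of 2 or 3 blocks, or
   the tripartite K_{3,3,3}; each of these has an explicit decomposition into tight
   9-cycles, checked by computation.  Copying these along the owners of the edges
   of each of the three hypergraphs gives the 2-split decomposition. *)

(** * Local designs *)

(* A local design on n blocks has points 0, ..., 3n-1, point l lying in block
   l %/ 3; its cycles are sequences of points.  The predicate [adm] selects, by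
   the blocks of its points, which triples must be covered exactly once by the
   windows of the cycles; all other triples must be avoided. *)

Definition window (c : seq nat) (i : nat) : seq nat :=
  [:: nth 0 c i; nth 0 c (i.+1 %% size c); nth 0 c (i.+2 %% size c)].

Definition same_elems (s t : seq nat) : bool := all (mem t) s && all (mem s) t.

Definition has_edge (t c : seq nat) : bool :=
  has (fun i => same_elems (window c i) t) (iota 0 (size c)).

Definition adm_triple (adm : nat -> nat -> nat -> bool) (t : seq nat) : bool :=
  if t is [:: x; y; z] then adm (x %/ 3) (y %/ 3) (z %/ 3) else false.

Definition local_design (k n : nat) (adm : nat -> nat -> nat -> bool)
    (cs : seq (seq nat)) : bool :=
  let pts := iota 0 (3 * n) in
  all (fun c => [&& size c == k, uniq c, all (fun x => x < 3 * n) c &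
                    all (fun i => adm_triple adm (window c i)) (iota 0 k)]) cs &&
  all (fun x => all (fun y => all (fun z => uniq [:: x; y; z] ==>
         (count (has_edge [:: x; y; z]) cs == adm (x %/ 3) (y %/ 3) (z %/ 3)))
       pts) pts) pts.

Definition not_all_equal (a b c : nat) : bool := ~~ ((a == b) && (b == c)).
Definition crossing (s a b c : nat) : bool :=
  [|| a < s, b < s | c < s] && [|| s <= a, s <= b | s <= c].
Definition all_distinct (a b c : nat) : bool := [&& a != b, b != c & a != c].

(* Found by computer search: [base_K3], [base_K4], [base_K5] decompose K - I on
   3, 4, 5 blocks, [base_T] the tripartite K_{3,3,3}, and [base_Cst] the triples
   meeting both the first s and the last t blocks. *)
Definition base_K3 : seq (seq nat) := [::
  [:: 0; 2; 8; 4; 6; 7; 5; 1; 3]; [:: 0; 5; 3; 6; 8; 2; 1; 4; 7]; [:: 0; 1; 4; 6; 5; 8; 3; 2; 7];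
  [:: 0; 5; 2; 3; 4; 8; 7; 1; 6]; [:: 0; 1; 5; 6; 2; 4; 7; 3; 8]; [:: 0; 7; 3; 6; 2; 1; 5; 4; 8];
  [:: 0; 2; 4; 5; 7; 3; 1; 8; 6]; [:: 0; 3; 4; 1; 8; 5; 2; 7; 6]; [:: 0; 4; 6; 3; 1; 2; 7; 8; 5]].

Definition base_K4 : seq (seq nat) := [::
  [:: 2; 5; 3; 1; 10; 7; 9; 8; 0]; [:: 5; 8; 6; 4; 2; 10; 1; 11; 3];
  [:: 8; 11; 9; 7; 5; 2; 4; 0; 6]; [:: 11; 0; 1; 10; 8; 5; 7; 3; 9];
  [:: 0; 3; 4; 2; 11; 8; 10; 6; 1]; [:: 3; 6; 7; 5; 0; 11; 2; 9; 4];
  [:: 6; 9; 10; 8; 3; 0; 5; 1; 7]; [:: 9; 1; 2; 11; 6; 3; 8; 4; 10];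
  [:: 1; 4; 5; 0; 9; 6; 11; 7; 2]; [:: 4; 7; 8; 3; 1; 9; 0; 10; 5];
  [:: 7; 10; 11; 6; 4; 1; 3; 2; 8]; [:: 10; 2; 0; 9; 7; 4; 6; 5; 11];
  [:: 2; 7; 4; 11; 9; 5; 6; 0; 3]; [:: 5; 10; 7; 0; 1; 8; 9; 3; 6];
  [:: 8; 2; 10; 3; 4; 11; 1; 6; 9]; [:: 11; 5; 2; 6; 7; 0; 4; 9; 1];
  [:: 0; 8; 5; 9; 10; 3; 7; 1; 4]; [:: 3; 11; 8; 1; 2; 6; 10; 4; 7];
  [:: 6; 0; 11; 4; 5; 9; 2; 7; 10]; [:: 9; 3; 0; 7; 8; 1; 5; 10; 2];
  [:: 1; 6; 3; 10; 11; 4; 8; 2; 5]; [:: 4; 9; 6; 2; 0; 7; 11; 5; 8];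
  [:: 7; 1; 9; 5; 3; 10; 0; 8; 11]; [:: 10; 4; 1; 8; 6; 2; 3; 11; 0]].

Definition base_K5 : seq (seq nat) := [::
  [:: 14; 0; 7; 9; 8; 4; 12; 1; 2]; [:: 0; 3; 10; 12; 11; 7; 1; 4; 5];
  [:: 3; 6; 13; 1; 14; 10; 4; 7; 8]; [:: 6; 9; 2; 4; 0; 13; 7; 10; 11];
  [:: 9; 12; 5; 7; 3; 2; 10; 13; 14]; [:: 12; 1; 8; 10; 6; 5; 13; 2; 0];
  [:: 1; 4; 11; 13; 9; 8; 2; 5; 3]; [:: 4; 7; 14; 2; 12; 11; 5; 8; 6];
  [:: 7; 10; 0; 5; 1; 14; 8; 11; 9]; [:: 10; 13; 3; 8; 4; 0; 11; 14; 12];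
  [:: 13; 2; 6; 11; 7; 3; 14; 0; 1]; [:: 2; 5; 9; 14; 10; 6; 0; 3; 4];
  [:: 5; 8; 12; 0; 13; 9; 3; 6; 7]; [:: 8; 11; 1; 3; 2; 12; 6; 9; 10];
  [:: 11; 14; 4; 6; 5; 1; 9; 12; 13]; [:: 2; 5; 0; 7; 1; 14; 9; 8; 6];
  [:: 5; 8; 3; 10; 4; 0; 12; 11; 9]; [:: 8; 11; 6; 13; 7; 3; 1; 14; 12];
  [:: 11; 14; 9; 2; 10; 6; 4; 0; 1]; [:: 14; 0; 12; 5; 13; 9; 7; 3; 4];
  [:: 0; 3; 1; 8; 2; 12; 10; 6; 7]; [:: 3; 6; 4; 11; 5; 1; 13; 9; 10];
  [:: 6; 9; 7; 14; 8; 4; 2; 12; 13]; [:: 9; 12; 10; 0; 11; 7; 5; 1; 2];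
  [:: 12; 1; 13; 3; 14; 10; 8; 4; 5]; [:: 1; 4; 2; 6; 0; 13; 11; 7; 8];
  [:: 4; 7; 5; 9; 3; 2; 14; 10; 11]; [:: 7; 10; 8; 12; 6; 5; 0; 13; 14];
  [:: 10; 13; 11; 1; 9; 8; 3; 2; 0]; [:: 13; 2; 14; 4; 12; 11; 6; 5; 3];
  [:: 1; 3; 9; 0; 5; 11; 2; 4; 10]; [:: 4; 6; 12; 3; 8; 14; 5; 7; 13];
  [:: 7; 9; 1; 6; 11; 0; 8; 10; 2]; [:: 10; 12; 4; 9; 14; 3; 11; 13; 5];
  [:: 13; 1; 7; 12; 0; 6; 14; 2; 8]; [:: 12; 2; 5; 10; 4; 9; 6; 14; 7];
  [:: 1; 5; 8; 13; 7; 12; 9; 0; 10]; [:: 4; 8; 11; 2; 10; 1; 12; 3; 13];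
  [:: 7; 11; 14; 5; 13; 4; 1; 6; 2]; [:: 10; 14; 0; 8; 2; 7; 4; 9; 5];
  [:: 13; 0; 3; 11; 5; 10; 7; 12; 8]; [:: 2; 3; 6; 14; 8; 13; 10; 1; 11];
  [:: 5; 6; 9; 0; 11; 2; 13; 4; 14]; [:: 8; 9; 12; 3; 14; 5; 2; 7; 0];
  [:: 11; 12; 1; 6; 0; 8; 5; 10; 3]; [:: 14; 1; 4; 9; 3; 11; 8; 13; 6];
  [:: 0; 4; 7; 12; 6; 14; 11; 2; 9]; [:: 3; 7; 10; 1; 9; 0; 14; 5; 12];
  [:: 6; 10; 13; 4; 12; 3; 0; 8; 1]; [:: 9; 13; 2; 7; 1; 6; 3; 11; 4]].

Definition base_T : seq (seq nat) := [::
  [:: 0; 3; 6; 2; 4; 8; 1; 5; 7]; [:: 0; 4; 7; 2; 5; 6; 1; 3; 8]; [:: 0; 5; 8; 2; 3; 7; 1; 4; 6]].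

Definition base_C22 : seq (seq nat) := [::
  [:: 11; 0; 6; 10; 5; 8; 2; 1; 9]; [:: 6; 3; 9; 8; 0; 11; 5; 4; 7];
  [:: 9; 1; 7; 11; 3; 6; 0; 2; 10]; [:: 7; 4; 10; 6; 1; 9; 3; 5; 8];
  [:: 10; 2; 8; 9; 4; 7; 1; 0; 11]; [:: 8; 5; 11; 7; 2; 10; 4; 3; 6];
  [:: 5; 9; 10; 3; 8; 2; 11; 6; 1]; [:: 0; 7; 8; 1; 11; 5; 6; 9; 4];
  [:: 3; 10; 11; 4; 6; 0; 9; 7; 2]; [:: 1; 8; 6; 2; 9; 3; 7; 10; 5];
  [:: 4; 11; 9; 5; 7; 1; 10; 8; 0]; [:: 2; 6; 7; 0; 10; 4; 8; 11; 3];
  [:: 8; 4; 6; 5; 3; 11; 0; 7; 2]; [:: 11; 2; 9; 0; 1; 6; 3; 10; 5];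
  [:: 6; 5; 7; 3; 4; 9; 1; 8; 0]; [:: 9; 0; 10; 1; 2; 7; 4; 11; 3];
  [:: 7; 3; 8; 4; 5; 10; 2; 6; 1]; [:: 10; 1; 11; 2; 0; 8; 5; 9; 4];
  [:: 11; 1; 3; 10; 0; 5; 9; 2; 4]; [:: 6; 4; 1; 8; 3; 0; 7; 5; 2]].

Definition base_C23 : seq (seq nat) := [::
  [:: 0; 11; 7; 3; 14; 8; 1; 6; 2]; [:: 1; 9; 8; 4; 12; 6; 2; 7; 0];
  [:: 2; 10; 6; 5; 13; 7; 0; 8; 1]; [:: 14; 2; 12; 5; 3; 6; 13; 0; 10];
  [:: 12; 0; 13; 3; 4; 7; 14; 1; 11]; [:: 13; 1; 14; 4; 5; 8; 12; 2; 9];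
  [:: 4; 14; 12; 0; 6; 3; 1; 11; 10]; [:: 5; 12; 13; 1; 7; 4; 2; 9; 11];
  [:: 3; 13; 14; 2; 8; 5; 0; 10; 9]; [:: 8; 0; 4; 14; 9; 1; 12; 6; 3];
  [:: 6; 1; 5; 12; 10; 2; 13; 7; 4]; [:: 7; 2; 3; 13; 11; 0; 14; 8; 5];
  [:: 2; 0; 9; 4; 12; 1; 14; 3; 10]; [:: 0; 1; 10; 5; 13; 2; 12; 4; 11];
  [:: 1; 2; 11; 3; 14; 0; 13; 5; 9]; [:: 5; 1; 8; 11; 0; 9; 7; 3; 13];
  [:: 3; 2; 6; 9; 1; 10; 8; 4; 14]; [:: 4; 0; 7; 10; 2; 11; 6; 5; 12];
  [:: 5; 4; 11; 7; 1; 8; 12; 0; 9]; [:: 3; 5; 9; 8; 2; 6; 13; 1; 10];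
  [:: 4; 3; 10; 6; 0; 7; 14; 2; 11]; [:: 2; 6; 14; 3; 12; 4; 10; 9; 5];
  [:: 0; 7; 12; 4; 13; 5; 11; 10; 3]; [:: 1; 8; 13; 5; 14; 3; 9; 11; 4];
  [:: 2; 13; 4; 9; 1; 11; 5; 3; 8]; [:: 0; 14; 5; 10; 2; 9; 3; 4; 6];
  [:: 1; 12; 3; 11; 0; 10; 4; 5; 7]; [:: 14; 5; 7; 9; 1; 3; 8; 4; 11];
  [:: 12; 3; 8; 10; 2; 4; 6; 5; 9]; [:: 13; 4; 6; 11; 0; 5; 7; 3; 10];
  [:: 6; 9; 0; 3; 12; 2; 7; 8; 4]; [:: 7; 10; 1; 4; 13; 0; 8; 6; 5];
  [:: 8; 11; 2; 5; 14; 1; 6; 7; 3]; [:: 7; 3; 1; 13; 0; 9; 14; 5; 12];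
  [:: 8; 4; 2; 14; 1; 10; 12; 3; 13]; [:: 6; 5; 0; 12; 2; 11; 13; 4; 14];
  [:: 9; 7; 4; 10; 6; 1; 0; 14; 2]; [:: 10; 8; 5; 11; 7; 2; 1; 12; 0];
  [:: 11; 6; 3; 9; 8; 0; 2; 13; 1]].

Definition base_C32 : seq (seq nat) := [::
  [:: 9; 5; 1; 12; 8; 2; 10; 0; 11]; [:: 10; 3; 2; 13; 6; 0; 11; 1; 9];
  [:: 11; 4; 0; 14; 7; 1; 9; 2; 10]; [:: 8; 11; 6; 14; 12; 0; 7; 9; 4];
  [:: 6; 9; 7; 12; 13; 1; 8; 10; 5]; [:: 7; 10; 8; 13; 14; 2; 6; 11; 3];
  [:: 13; 8; 6; 9; 0; 12; 10; 5; 4]; [:: 14; 6; 7; 10; 1; 13; 11; 3; 5];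
  [:: 12; 7; 8; 11; 2; 14; 9; 4; 3]; [:: 2; 9; 13; 8; 3; 10; 6; 0; 12];
  [:: 0; 10; 14; 6; 4; 11; 7; 1; 13]; [:: 1; 11; 12; 7; 5; 9; 8; 2; 14];
  [:: 11; 9; 3; 13; 6; 10; 8; 12; 4]; [:: 9; 10; 4; 14; 7; 11; 6; 13; 5];
  [:: 10; 11; 5; 12; 8; 9; 7; 14; 3]; [:: 14; 10; 2; 5; 9; 3; 1; 12; 7];
  [:: 12; 11; 0; 3; 10; 4; 2; 13; 8]; [:: 13; 9; 1; 4; 11; 5; 0; 14; 6];
  [:: 14; 13; 5; 1; 10; 2; 6; 9; 3]; [:: 12; 14; 3; 2; 11; 0; 7; 10; 4];
  [:: 13; 12; 4; 0; 9; 1; 8; 11; 5]; [:: 11; 0; 8; 12; 6; 13; 4; 3; 14];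
  [:: 9; 1; 6; 13; 7; 14; 5; 4; 12]; [:: 10; 2; 7; 14; 8; 12; 3; 5; 13];
  [:: 11; 7; 13; 3; 10; 5; 14; 12; 2]; [:: 9; 8; 14; 4; 11; 3; 12; 13; 0];
  [:: 10; 6; 12; 5; 9; 4; 13; 14; 1]; [:: 8; 14; 1; 3; 10; 12; 2; 13; 5];
  [:: 6; 12; 2; 4; 11; 13; 0; 14; 3]; [:: 7; 13; 0; 5; 9; 14; 1; 12; 4];
  [:: 0; 3; 9; 12; 6; 11; 1; 2; 13]; [:: 1; 4; 10; 13; 7; 9; 2; 0; 14];
  [:: 2; 5; 11; 14; 8; 10; 0; 1; 12]; [:: 1; 12; 10; 7; 9; 3; 8; 14; 6];
  [:: 2; 13; 11; 8; 10; 4; 6; 12; 7]; [:: 0; 14; 9; 6; 11; 5; 7; 13; 8];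
  [:: 3; 1; 13; 4; 0; 10; 9; 8; 11]; [:: 4; 2; 14; 5; 1; 11; 10; 6; 9];
  [:: 5; 0; 12; 3; 2; 9; 11; 7; 10]].

Definition base_C33 : seq (seq nat) := [::
  [:: 15; 3; 7; 13; 1; 8; 16; 6; 0]; [:: 10; 6; 2; 16; 4; 0; 11; 1; 3];
  [:: 13; 1; 5; 11; 7; 3; 14; 4; 6]; [:: 16; 4; 8; 14; 2; 6; 17; 7; 1];
  [:: 11; 7; 0; 17; 5; 1; 9; 2; 4]; [:: 14; 2; 3; 9; 8; 4; 12; 5; 7];
  [:: 17; 5; 6; 12; 0; 7; 15; 8; 2]; [:: 9; 8; 1; 15; 3; 2; 10; 0; 5];
  [:: 12; 0; 4; 10; 6; 5; 13; 3; 8]; [:: 2; 14; 1; 12; 17; 4; 13; 5; 16];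
  [:: 5; 17; 4; 15; 9; 7; 16; 8; 11]; [:: 8; 9; 7; 10; 12; 2; 11; 0; 14];
  [:: 0; 12; 2; 13; 15; 5; 14; 3; 17]; [:: 3; 15; 5; 16; 10; 8; 17; 6; 9];
  [:: 6; 10; 8; 11; 13; 0; 9; 1; 12]; [:: 1; 13; 0; 14; 16; 3; 12; 4; 15];
  [:: 4; 16; 3; 17; 11; 6; 15; 7; 10]; [:: 7; 11; 6; 9; 14; 1; 10; 2; 13];
  [:: 9; 2; 8; 12; 16; 7; 4; 14; 0]; [:: 12; 5; 0; 15; 11; 2; 7; 17; 3];
  [:: 15; 8; 3; 10; 14; 5; 2; 9; 6]; [:: 10; 0; 6; 13; 17; 8; 5; 12; 1];
  [:: 13; 3; 1; 16; 9; 0; 8; 15; 4]; [:: 16; 6; 4; 11; 12; 3; 0; 10; 7];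
  [:: 11; 1; 7; 14; 15; 6; 3; 13; 2]; [:: 14; 4; 2; 17; 10; 1; 6; 16; 5];
  [:: 17; 7; 5; 9; 13; 4; 1; 11; 8]; [:: 17; 13; 3; 16; 7; 2; 10; 9; 1];
  [:: 9; 16; 6; 11; 2; 5; 13; 12; 4]; [:: 12; 11; 1; 14; 5; 8; 16; 15; 7];
  [:: 15; 14; 4; 17; 8; 0; 11; 10; 2]; [:: 10; 17; 7; 9; 0; 3; 14; 13; 5];
  [:: 13; 9; 2; 12; 3; 6; 17; 16; 8]; [:: 16; 12; 5; 15; 6; 1; 9; 11; 0];
  [:: 11; 15; 8; 10; 1; 4; 12; 14; 3]; [:: 14; 10; 0; 13; 4; 7; 15; 17; 6];
  [:: 12; 9; 8; 17; 1; 0; 15; 2; 5]; [:: 15; 12; 0; 9; 4; 3; 10; 5; 8];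
  [:: 10; 15; 3; 12; 7; 6; 13; 8; 0]; [:: 13; 10; 6; 15; 2; 1; 16; 0; 3];
  [:: 16; 13; 1; 10; 5; 4; 11; 3; 6]; [:: 11; 16; 4; 13; 8; 7; 14; 6; 1];
  [:: 14; 11; 7; 16; 0; 2; 17; 1; 4]; [:: 17; 14; 2; 11; 3; 5; 9; 4; 7];
  [:: 9; 17; 5; 14; 6; 8; 12; 7; 2]; [:: 4; 2; 13; 0; 16; 8; 9; 6; 12];
  [:: 7; 5; 16; 3; 11; 0; 12; 1; 15]; [:: 2; 8; 11; 6; 14; 3; 15; 4; 10];
  [:: 5; 0; 14; 1; 17; 6; 10; 7; 13]; [:: 8; 3; 17; 4; 9; 1; 13; 2; 16];
  [:: 0; 6; 9; 7; 12; 4; 16; 5; 11]; [:: 3; 1; 12; 2; 15; 7; 11; 8; 14];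
  [:: 6; 4; 15; 5; 10; 2; 14; 0; 17]; [:: 1; 7; 10; 8; 13; 5; 17; 3; 9];
  [:: 17; 7; 11; 10; 1; 15; 14; 8; 12]; [:: 9; 2; 14; 13; 4; 10; 17; 0; 15];
  [:: 12; 5; 17; 16; 7; 13; 9; 3; 10]; [:: 15; 8; 9; 11; 2; 16; 12; 6; 13];
  [:: 10; 0; 12; 14; 5; 11; 15; 1; 16]; [:: 13; 3; 15; 17; 8; 14; 10; 4; 11];
  [:: 16; 6; 10; 9; 0; 17; 13; 7; 14]; [:: 11; 1; 13; 12; 3; 9; 16; 2; 17];
  [:: 14; 4; 16; 15; 6; 12; 11; 5; 9]; [:: 0; 16; 5; 9; 10; 8; 4; 11; 17];
  [:: 3; 11; 8; 12; 13; 0; 7; 14; 9]; [:: 6; 14; 0; 15; 16; 3; 2; 17; 12];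
  [:: 1; 17; 3; 10; 11; 6; 5; 9; 15]; [:: 4; 9; 6; 13; 14; 1; 8; 12; 10];
  [:: 7; 12; 1; 16; 17; 4; 0; 15; 13]; [:: 2; 15; 4; 11; 9; 7; 3; 10; 16];
  [:: 5; 10; 7; 14; 12; 2; 6; 13; 11]; [:: 8; 13; 2; 17; 15; 5; 1; 16; 14]].

Lemma base_K3_design : local_design 9 3 not_all_equal base_K3. Proof. by vm_compute. Qed.
Lemma base_K4_design : local_design 9 4 not_all_equal base_K4. Proof. by vm_compute. Qed.
Lemma base_K5_design : local_design 9 5 not_all_equal base_K5. Proof. by vm_compute. Qed.
Lemma base_T_design : local_design 9 3 all_distinct base_T. Proof. by vm_compute. Qed.
Lemma base_C22_design : local_design 9 4 (crossing 2) base_C22. Proof. by vm_compute. Qed.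
Lemma base_C23_design : local_design 9 5 (crossing 2) base_C23. Proof. by vm_compute. Qed.
Lemma base_C32_design : local_design 9 5 (crossing 3) base_C32. Proof. by vm_compute. Qed.
Lemma base_C33_design : local_design 9 6 (crossing 3) base_C33. Proof. by vm_compute. Qed.

(** * Copying a local design onto the vertices *)

Lemma set3_eqE (T : finType) (x1 x2 x3 y1 y2 y3 : T) :
  ([set x1; x2; x3] == [set y1; y2; y3]) =
  [&& [|| x1 == y1, x1 == y2 | x1 == y3], [|| x2 == y1, x2 == y2 | x2 == y3],
      [|| x3 == y1, x3 == y2 | x3 == y3], [|| y1 == x1, y1 == x2 | y1 == x3],
      [|| y2 == x1, y2 == x2 | y2 == x3] & [|| y3 == x1, y3 == x2 | y3 == x3]].
Proof. by rewrite eqEsubset !subUset !sub1set !inE -!orbA -!andbA. Qed.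

Lemma uniq_cyclic_window k i : 2 < k -> i < k -> uniq [:: i; i.+1 %% k; i.+2 %% k].
Proof.
move=> k3 ik; rewrite /= !inE andbT.
have [h2|] := ltnP i.+2 k; first by rewrite !modn_small //; lia.
rewrite leq_eqVlt => /orP [/eqP e2|h2].
  by rewrite -e2 modnn modn_small; lia.
have e1 : i.+1 = k by lia.
by rewrite e1 modnn -e1 -addn1 modnDl modn_small; lia.
Qed.

Definition blk n (x : 'I_n) : nat := x %/ 3.

Definition covers_blocks (A : seq nat) (adm : nat -> nat -> nat -> bool)
    (b1 b2 b3 : nat) : bool :=
  [&& b1 \in A, b2 \in A, b3 \in A & adm (index b1 A) (index b2 A) (index b3 A)].

Section Lift.
Variables (n k : nat) (A : seq nat) (adm : nat -> nat -> nat -> bool).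
Variable cs : seq (seq nat).
Hypothesis k_gt2 : 2 < k.
Hypothesis A_uniq : uniq A.
Hypothesis A_fit : all (fun b => 3 * b + 2 <= n) A.
Hypothesis cs_design : local_design k (size A) adm cs.

Definition lift_point (l : nat) : 'I_n.+1 := inord (3 * nth 0 A (l %/ 3) + l %% 3).

Definition lift_cycle (c : seq nat) : k.-tuple 'I_n.+1 :=
  [tuple lift_point (nth 0 c i) | i < k].

Definition local_point (x : 'I_n.+1) : nat := 3 * index (blk x) A + x %% 3.

Lemma mem_nth_block l : l < 3 * size A -> nth 0 A (l %/ 3) \in A.
Proof. by move=> hl; apply: mem_nth; rewrite ltn_divLR // mulnC. Qed.

Lemma lift_pointE l : l < 3 * size A -> lift_point l = 3 * nth 0 A (l %/ 3) + l %% 3 :> nat.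
Proof.
move=> /mem_nth_block hA; rewrite inordK //.
by move/allP: A_fit => /(_ _ hA); lia.
Qed.

Lemma blk_lift_point l : l < 3 * size A -> blk (lift_point l) = nth 0 A (l %/ 3).
Proof. by move=> hl; rewrite /blk lift_pointE //; lia. Qed.

Lemma lift_point_inj l l' : l < 3 * size A -> l' < 3 * size A ->
  (lift_point l == lift_point l') = (l == l').
Proof.
move=> hl hl'; apply/eqP/eqP => [E|-> //].
have /(congr1 (@nat_of_ord _)) := E; rewrite !lift_pointE // => E'.
have /eqP : nth 0 A (l %/ 3) = nth 0 A (l' %/ 3) by lia.
rewrite nth_uniq ?ltn_divLR 1?mulnC // => /eqP; lia.
Qed.

Lemma local_point_range x : blk x \in A -> local_point x < 3 * size A.
Proof.
move=> hx; have : index (blk x) A < size A by rewrite index_mem.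
by rewrite /local_point; lia.
Qed.

Lemma local_point_blk x : local_point x %/ 3 = index (blk x) A.
Proof. by rewrite /local_point; lia. Qed.

Lemma local_pointK x : blk x \in A -> lift_point (local_point x) = x.
Proof.
move=> hx; apply: val_inj => /=.
rewrite lift_pointE ?local_point_range // local_point_blk nth_index //.
by rewrite /local_point /blk; lia.
Qed.

Lemma design_cycle c : c \in cs ->
  [/\ size c = k, uniq c, forall i, i < k -> nth 0 c i < 3 * size A &
      forall i, i < k -> adm_triple adm (window c i)].
Proof.
case/andP: cs_design => /allP /(_ c) h _ /h /and4P [/eqP sc -> /allP hr /allP hw].
split=> // i hi; first by apply/hr/mem_nth; rewrite sc.
by apply: hw; rewrite mem_iota.
Qed.

Lemma design_count x y z : x < 3 * size A -> y < 3 * size A -> z < 3 * size A ->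
  uniq [:: x; y; z] -> count (has_edge [:: x; y; z]) cs = adm (x %/ 3) (y %/ 3) (z %/ 3).
Proof.
have pts w : w < 3 * size A -> w \in iota 0 (3 * size A) by rewrite mem_iota.
case/andP: cs_design => _ /allP h /pts hx /pts hy /pts hz u.
by move: (h x hx) => /allP /(_ y hy) /allP /(_ z hz); rewrite u => /eqP.
Qed.

Lemma mem_cyc_edges_lift c e :
  (e \in cyc_edges (lift_cycle c)) =
  has (fun i => e == [set lift_point (nth 0 c i); lift_point (nth 0 c (i.+1 %% k));
                          lift_point (nth 0 c (i.+2 %% k))]) (iota 0 k).
Proof.
have modS2 j : (j.+1 %% k).+1 %% k = j.+2 %% k by rewrite -addn1 modnDml addn1.
apply/imsetP/hasP => [[i _ ->]|[i]]; last first.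
  rewrite mem_iota add0n => /andP [_ hi] /eqP ->.
  by exists (Ordinal hi) => //; rewrite !tnth_mktuple /= modS2.
exists (nat_of_ord i); first by rewrite mem_iota /=.
by rewrite !tnth_mktuple /= modS2.
Qed.

Lemma lift_edgeE c x y z : c \in cs ->
  x < 3 * size A -> y < 3 * size A -> z < 3 * size A ->
  ([set lift_point x; lift_point y; lift_point z] \in cyc_edges (lift_cycle c)) =
  has_edge [:: x; y; z] c.
Proof.
move=> /design_cycle [sc _ hr _] hx hy hz.
rewrite mem_cyc_edges_lift /has_edge sc; apply: eq_in_has => i.
rewrite mem_iota add0n => /andP [_ hi].
rewrite /window sc eq_sym set3_eqE !lift_point_inj ?hr ?ltn_pmod //; try lia.
by rewrite /same_elems /= !inE !andbT -!andbA.
Qed.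

Lemma lift_edgeP c e : c \in cs -> e \in cyc_edges (lift_cycle c) ->
  exists x y z, [/\ uniq [:: x; y; z], [/\ x < 3 * size A, y < 3 * size A & z < 3 * size A],
    adm (x %/ 3) (y %/ 3) (z %/ 3) & e = [set lift_point x; lift_point y; lift_point z]].
Proof.
move=> hc; have [sc uc hr hw] := design_cycle hc.
rewrite mem_cyc_edges_lift => /hasP [i]; rewrite mem_iota add0n => /andP [_ hi] /eqP ->.
have hmod j : j %% k < k by rewrite ltn_pmod //; lia.
exists (nth 0 c i), (nth 0 c (i.+1 %% k)), (nth 0 c (i.+2 %% k)); split; rewrite ?hr //.
- by have := uniq_cyclic_window k_gt2 hi; rewrite /= !inE !nth_uniq ?sc.
- by have := hw i hi; rewrite /window sc.
Qed.

Lemma lift_edge c e : c \in cs -> e \in cyc_edges (lift_cycle c) ->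
  exists X Y Z : 'I_n.+1, [/\ uniq [:: X; Y; Z], e = [set X; Y; Z] &
                             covers_blocks A adm (blk X) (blk Y) (blk Z)].
Proof.
move=> hc /(lift_edgeP hc) [x [y [z [u [hx hy hz] ha ->]]]].
exists (lift_point x), (lift_point y), (lift_point z); split=> //.
  by move: u; rewrite /= !inE !lift_point_inj.
have idx l : l < 3 * size A -> index (nth 0 A (l %/ 3)) A = l %/ 3.
  by move=> hl; apply: index_uniq; rewrite // ltn_divLR // mulnC.
by rewrite /covers_blocks !blk_lift_point // !mem_nth_block // !idx.
Qed.

Lemma lift_edge_blk c e X : c \in cs -> e \in cyc_edges (lift_cycle c) ->
  X \in e -> blk X \in A.
Proof.
move=> hc /(lift_edgeP hc) [x [y [z [_ [hx hy hz] _ ->]]]].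
by rewrite !inE -orbA => /or3P [] /eqP ->; rewrite blk_lift_point ?mem_nth_block.
Qed.

Lemma local_point_inj X Y : blk X \in A -> blk Y \in A ->
  (local_point X == local_point Y) = (X == Y).
Proof.
move=> hX hY; apply/eqP/eqP => [E|-> //].
by rewrite -(local_pointK hX) -(local_pointK hY) E.
Qed.

Lemma count_lift (X Y Z : 'I_n.+1) : uniq [:: X; Y; Z] ->
  count (fun t => [set X; Y; Z] \in cyc_edges t) (map lift_cycle cs) =
  covers_blocks A adm (blk X) (blk Y) (blk Z).
Proof.
move=> u; rewrite count_map /covers_blocks.
case: (boolP [&& blk X \in A, blk Y \in A & blk Z \in A]) => [/and3P [hX hY hZ]|hout].
  have ul : uniq [:: local_point X; local_point Y; local_point Z].
    by move: u; rewrite /= !inE !local_point_inj.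
  rewrite -[X in [set X; _; _]](local_pointK hX) -[Y in [set _; Y; _]](local_pointK hY).
  rewrite -[Z in [set _; _; Z]](local_pointK hZ).
  rewrite (eq_in_count (a2 := has_edge [:: local_point X; local_point Y; local_point Z])).
    by rewrite design_count ?local_point_range // !local_point_blk hX hY hZ.
  by move=> c hc; rewrite /= lift_edgeE ?local_point_range.
have -> : [&& blk X \in A, blk Y \in A, blk Z \in A & adm (index (blk X) A)
             (index (blk Y) A) (index (blk Z) A)] = false.
  by apply/negbTE; apply: contra hout => /and4P [-> -> -> _].
apply/eqP; rewrite -leqn0 leqNgt -has_count; apply/hasPn => c hc /=.
apply: contra hout => he; apply/and3P.
by split; apply: (lift_edge_blk hc he); rewrite !inE eqxx ?orbT.
Qed.

Lemma lift_uniq c : c \in cs -> uniq (lift_cycle c).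
Proof.
move=> hc; have [sc uc hr _] := design_cycle hc.
rewrite map_inj_uniq ?enum_uniq // => i j /eqP.
by rewrite lift_point_inj ?hr // nth_uniq ?sc // => /eqP /val_inj.
Qed.
End Lift.

(** * Pieces and their owners *)

(* [lo b] and [hi b] are the ends of the interval of the partition containing b. *)
Definition interval_partition (M : nat) (lo hi : nat -> nat) : Prop :=
  forall b, b < M -> [/\ lo b <= b < hi b, hi b <= M &
                        forall x, lo b <= x < hi b -> lo x = lo b /\ hi x = hi b].

Lemma interval_partition_sep M lo hi b x : interval_partition M lo hi ->
  b <= x < M -> (x < hi b) || (hi b <= lo x).
Proof.
move=> ip hbx; have [hb _ eqb] := ip b ltac:(lia); have [hx _ eqx] := ip x ltac:(lia).
case: (ltnP x (hi b)) => //= hxb; case: (leqP (lo x) b) => hlb.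
  by have [_] := eqx b ltac:(lia); lia.
rewrite leqNgt; apply/negP => hlo.
have [E1 _] := eqb (lo x) ltac:(lia); have [E2 _] := eqx (lo x) ltac:(lia); lia.
Qed.

Inductive piece : Type :=
  | Group of nat & nat
  | Pair of nat & nat & nat & nat
  | Triple of nat & nat & nat.

Definition piece_code (p : piece) : nat * nat * nat * nat * nat :=
  match p with
  | Group l h => (0, l, h, 0, 0)
  | Pair l1 h1 l2 h2 => (1, l1, h1, l2, h2)
  | Triple a b c => (2, a, b, c, 0)
  end.

Definition piece_decode (t : nat * nat * nat * nat * nat) : piece :=
  let: (tag, x1, x2, x3, x4) := t in
  if tag is 0 then Group x1 x2 else if tag is 1 then Pair x1 x2 x3 x4 else Triple x1 x2 x3.

Lemma piece_codeK : cancel piece_code piece_decode. Proof. by case. Qed.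

HB.instance Definition _ := Equality.copy piece (can_type piece_codeK).

Definition piece_blocks (p : piece) : seq nat :=
  match p with
  | Group l h => iota l (h - l)
  | Pair l1 h1 l2 h2 => iota l1 (h1 - l1) ++ iota l2 (h2 - l2)
  | Triple a b c => [:: a; b; c]
  end.

Definition piece_adm (p : piece) : nat -> nat -> nat -> bool :=
  match p with
  | Group _ _ => not_all_equal
  | Pair l1 h1 _ _ => crossing (h1 - l1)
  | Triple _ _ _ => all_distinct
  end.

Definition piece_base (p : piece) : seq (seq nat) :=
  match p with
  | Group l h => if h - l == 3 then base_K3 else if h - l == 4 then base_K4 else base_K5
  | Pair l1 h1 l2 h2 =>
      if h1 - l1 == 2 then (if h2 - l2 == 2 then base_C22 else base_C23)
      else (if h2 - l2 == 2 then base_C32 else base_C33)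
  | Triple _ _ _ => base_T
  end.

Definition piece_covers (p : piece) : nat -> nat -> nat -> bool :=
  covers_blocks (piece_blocks p) (piece_adm p).

Lemma index_iota l n b : l <= b < l + n -> index b (iota l n) = b - l.
Proof.
move=> hb; have hi : b - l < size (iota l n) by rewrite size_iota; lia.
by have := index_uniq 0 hi (iota_uniq l n); rewrite nth_iota ?subnKC //; lia.
Qed.

Lemma covers_Group l h b1 b2 b3 : l <= h ->
  piece_covers (Group l h) b1 b2 b3 =
  [&& l <= b1 < h, l <= b2 < h, l <= b3 < h & not_all_equal b1 b2 b3].
Proof.
move=> lh; rewrite /piece_covers /covers_blocks /= !mem_iota subnKC //.
have [h1|] := boolP (l <= b1 < h); have [h2|] := boolP (l <= b2 < h);
  have [h3|] := boolP (l <= b3 < h) => //=.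
by rewrite !index_iota ?subnKC // /not_all_equal; apply/idP/idP; lia.
Qed.

Lemma covers_Pair l1 h1 l2 h2 b1 b2 b3 : l1 <= h1 <= l2 -> l2 <= h2 ->
  piece_covers (Pair l1 h1 l2 h2) b1 b2 b3 =
  [&& [&& (l1 <= b1 < h1) || (l2 <= b1 < h2), (l1 <= b2 < h1) || (l2 <= b2 < h2)
        & (l1 <= b3 < h1) || (l2 <= b3 < h2)],
      [|| b1 < h1, b2 < h1 | b3 < h1] & [|| l2 <= b1, l2 <= b2 | l2 <= b3]].
Proof.
move=> /andP [lh1 hl2] lh2; pose B := iota l1 (h1 - l1) ++ iota l2 (h2 - l2).
have memB b : (b \in B) = (l1 <= b < h1) || (l2 <= b < h2).
  by rewrite mem_cat !mem_iota !subnKC.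
have idxB b : b \in B -> index b B = if b < h1 then b - l1 else h1 - l1 + (b - l2).
  rewrite memB index_cat !mem_iota !subnKC // size_iota => /orP [] hb.
    by rewrite hb index_iota ?subnKC //; case: ifP; lia.
  case: ifP => [?|_]; first lia.
  by rewrite index_iota ?subnKC //; case: ifP; lia.
rewrite /piece_covers /covers_blocks -/B /= -!memB.
have [m1|] := boolP (b1 \in B); have [m2|] := boolP (b2 \in B);
  have [m3|] := boolP (b3 \in B) => //=.
move: m1 m2 m3; rewrite /crossing !memB => m1 m2 m3.
by rewrite !idxB ?memB //; do 3 case: ifP => ?; apply/idP/idP; lia.
Qed.

Lemma covers_Triple a b c b1 b2 b3 :
  piece_covers (Triple a b c) b1 b2 b3 =
  [&& b1 \in [:: a; b; c], b2 \in [:: a; b; c], b3 \in [:: a; b; c] &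
      all_distinct b1 b2 b3].
Proof.
rewrite /piece_covers /covers_blocks /=.
have idx_inj x y : x \in [:: a; b; c] -> y \in [:: a; b; c] ->
    (index x [:: a; b; c] == index y [:: a; b; c]) = (x == y).
  move=> hx hy; apply/eqP/eqP => [E|-> //].
  by rewrite -(nth_index 0 hx) -(nth_index 0 hy) E.
have [h1|] := boolP (b1 \in _); have [h2|] := boolP (b2 \in _);
  have [h3|] := boolP (b3 \in _) => //=.
by rewrite /all_distinct !idx_inj.
Qed.

Lemma piece_covers_diag p b : piece_covers p b b b = false.
Proof.
by case: p => *; rewrite /piece_covers /covers_blocks /= /not_all_equal /crossing
  /all_distinct ?eqxx ?andbF // !orbb ltnNge andNb !andbF.
Qed.

Lemma piece_coversC p b1 b2 b3 :
  piece_covers p b1 b2 b3 = piece_covers p b2 b1 b3 /\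
  piece_covers p b1 b2 b3 = piece_covers p b1 b3 b2.
Proof.
have sym (adm : nat -> nat -> nat -> bool) :
    (forall a b c, adm a b c = adm b a c) -> (forall a b c, adm a b c = adm a c b) ->
    forall A, covers_blocks A adm b1 b2 b3 = covers_blocks A adm b2 b1 b3 /\
              covers_blocks A adm b1 b2 b3 = covers_blocks A adm b1 b3 b2.
  by move=> s1 s2 A; split; rewrite /covers_blocks; [rewrite s1 | rewrite s2];
    case: (b1 \in A); case: (b2 \in A); case: (b3 \in A).
by case: p => * /=; apply: sym => a b c /=;
  rewrite /not_all_equal /crossing /all_distinct; apply/idP/idP; lia.
Qed.

Section Owner.
Variables (M : nat) (glo ghi slo shi : nat -> nat).
Hypothesis groups : interval_partition M glo ghi.
Hypothesis cells : interval_partition M slo shi.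
Hypothesis cells_in_groups : forall b, b < M -> glo b <= slo b /\ shi b <= ghi b.
Hypothesis group_sizes : forall b, b < M -> 3 <= ghi b - glo b <= 5.
Hypothesis cell_sizes : forall b, b < M -> 2 <= shi b - slo b <= 3.

Definition owner (b1 b2 b3 : nat) : piece :=
  if b3 < ghi b1 then Group (glo b1) (ghi b1)
  else if (b2 < shi b1) || (slo b3 <= b2) then Pair (slo b1) (shi b1) (slo b3) (shi b3)
  else Triple b1 b2 b3.

Lemma block_bounds b : b < M ->
  [/\ glo b <= slo b, slo b <= b, b < shi b, shi b <= ghi b & ghi b <= M].
Proof.
move=> hb; have [/andP [? ?] ? _] := groups hb; have [/andP [? ?] ? _] := cells hb.
by have [? ?] := cells_in_groups hb; split.
Qed.

Lemma owner_covers b1 b2 b3 : b1 <= b2 <= b3 -> b3 < M -> not_all_equal b1 b2 b3 ->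
  piece_covers (owner b1 b2 b3) b1 b2 b3.
Proof.
move=> hb hbM hne; have [hb1 hb3] : b1 < M /\ b3 < M by lia.
have [? ? ? ? ?] := block_bounds hb1; have [? ? ? ? ?] := block_bounds hb3.
have sep : (b3 < ghi b1) || (ghi b1 <= glo b3).
  by apply: interval_partition_sep groups _; lia.
rewrite /owner; case: ifP => h1; first by rewrite covers_Group //; lia.
case: ifP => h2; first by rewrite covers_Pair //; lia.
by rewrite covers_Triple !inE !eqxx !orbT /all_distinct; lia.
Qed.

Lemma group_eq b x : b < M -> glo b <= x < ghi b -> glo x = glo b /\ ghi x = ghi b.
Proof. by move=> hb; have [_ _] := groups hb; apply. Qed.

Lemma cell_eq b x : b < M -> slo b <= x < shi b -> slo x = slo b /\ shi x = shi b.
Proof. by move=> hb; have [_ _] := cells hb; apply. Qed.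

Lemma owner_covered c1 c2 c3 b1 b2 b3 :
  c1 <= c2 <= c3 -> c3 < M -> not_all_equal c1 c2 c3 ->
  b1 <= b2 <= b3 -> b3 < M -> piece_covers (owner c1 c2 c3) b1 b2 b3 ->
  owner b1 b2 b3 = owner c1 c2 c3 /\ [/\ glo c1 <= b1 < ghi c1 & glo c3 <= b3 < ghi c3].
Proof.
move=> hc hcM hne hb hbM; have [hc1 hc3] : c1 < M /\ c3 < M by lia.
have [? ? ? ? ?] := block_bounds hc1; have [? ? ? ? ?] := block_bounds hc3.
have sep : (c3 < ghi c1) || (ghi c1 <= glo c3).
  by apply: interval_partition_sep groups _; lia.
rewrite [owner c1 c2 c3]/owner; case: ifP => h1.
  rewrite covers_Group => [cov|]; last by lia.
  have [g1 g1'] : glo b1 = glo c1 /\ ghi b1 = ghi c1 by apply: group_eq; lia.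
  have [g3 g3'] : glo c3 = glo c1 /\ ghi c3 = ghi c1 by apply: group_eq; lia.
  rewrite /owner g1 g1' ifT; last by lia.
  by split=> //; lia.
case: ifP => h2.
  rewrite covers_Pair; try lia.
  move=> cov; have [hb1 hb3] : slo c1 <= b1 < shi c1 /\ slo c3 <= b3 < shi c3 by lia.
  have [s1 s1'] := cell_eq hc1 hb1; have [s3 s3'] := cell_eq hc3 hb3.
  have [g1 g1'] : glo b1 = glo c1 /\ ghi b1 = ghi c1 by apply: group_eq; lia.
  rewrite /owner g1' s1 s1' s3 s3' ifF ?ifT; try lia.
  by split=> //; lia.
rewrite covers_Triple /all_distinct !inE => cov.
have [-> [-> ->]] : b1 = c1 /\ b2 = c2 /\ b3 = c3 by lia.
by rewrite /owner h1 h2; split=> //; lia.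
Qed.

Lemma owner_design c1 c2 c3 : c1 <= c2 <= c3 -> c3 < M -> not_all_equal c1 c2 c3 ->
  let p := owner c1 c2 c3 in
  [/\ uniq (piece_blocks p), all (fun b => b < M) (piece_blocks p) &
      local_design 9 (size (piece_blocks p)) (piece_adm p) (piece_base p)].
Proof.
move=> hc hcM hne; have [hc1 hc3] : c1 < M /\ c3 < M by lia.
have [? ? ? ? ?] := block_bounds hc1; have [? ? ? ? ?] := block_bounds hc3.
have sep : (c3 < ghi c1) || (ghi c1 <= glo c3).
  by apply: interval_partition_sep groups _; lia.
rewrite /owner; case: ifP => h1; [|case: ifP => h2];
  cbn [piece_blocks piece_adm piece_base].
- rewrite size_iota; split; first exact: iota_uniq.
    by apply/allP => b; rewrite mem_iota; lia.
  have [->|[->|->]] : ghi c1 - glo c1 = 3 \/ ghi c1 - glo c1 = 4 \/ ghi c1 - glo c1 = 5.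
    by have := group_sizes hc1; lia.
  + exact: base_K3_design.
  + exact: base_K4_design.
  + exact: base_K5_design.
- rewrite size_cat !size_iota cat_uniq !iota_uniq andbT; split.
  + by apply/hasPn => b; rewrite !mem_iota; lia.
  + by apply/allP => b; rewrite mem_cat !mem_iota; lia.
  have [->|->] : shi c1 - slo c1 = 2 \/ shi c1 - slo c1 = 3 by have := cell_sizes hc1; lia.
  + have [->|->] : shi c3 - slo c3 = 2 \/ shi c3 - slo c3 = 3 by have := cell_sizes hc3; lia.
    * exact: base_C22_design.
    * exact: base_C23_design.
  + have [->|->] : shi c3 - slo c3 = 2 \/ shi c3 - slo c3 = 3 by have := cell_sizes hc3; lia.
    * exact: base_C32_design.
    * exact: base_C33_design.
- split; [|by apply/and3P; split; lia|exact: base_T_design].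
  by rewrite /= !inE; lia.
Qed.
End Owner.

(** * Decomposing a class of block triples *)

Lemma card3P (T : finType) (e : {set T}) :
  #|e| = 3 -> exists x y z, uniq [:: x; y; z] /\ e = [set x; y; z].
Proof.
move=> he; have /card_gt0P [x hx] : 0 < #|e| by rewrite he.
have /cards2P [y [z [nyz E]]] : #|e :\ x| == 2 by move: he; rewrite (cardsD1 x) hx; lia.
have : (y \in e :\ x) && (z \in e :\ x) by rewrite E !inE !eqxx orbT.
rewrite !inE => /andP [/andP [nyx _] /andP [nzx _]].
exists x, y, z; split; first by rewrite /= !inE negb_or eq_sym nyx eq_sym nzx nyz.
by rewrite -(setD1K hx) E; apply/setP => w; rewrite !inE orbA.
Qed.

Lemma sort_triple k (F : 'I_k -> 'I_k -> 'I_k -> bool) :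
  (forall a b c, F a b c = F b a c) -> (forall a b c, F a b c = F a c b) ->
  forall X Y Z : 'I_k, uniq [:: X; Y; Z] ->
  exists X' Y' Z' : 'I_k,
    [/\ X' < Y' < Z', [set X; Y; Z] = [set X'; Y'; Z'] & F X Y Z = F X' Y' Z'].
Proof.
move=> s1 s2 X Y Z; rewrite /= !inE negb_or -!val_eqE /= => /and3P [/andP [nXY nXZ] nYZ _].
have setC (a b c : 'I_k) : [set a; b; c] = [set b; a; c] /\ [set a; b; c] = [set a; c; b].
  by split; apply/setP => w; rewrite !inE; case: (w == a); case: (w == b); case: (w == c).
case: (ltngtP X Y) nXY => // hXY _; case: (ltngtP Y Z) nYZ => // hYZ _;
  case: (ltngtP X Z) nXZ => // hXZ _; try lia.
- by exists X, Y, Z; split=> //; lia.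
- by exists X, Z, Y; rewrite (setC X Y Z).2 s2; split=> //; lia.
- by exists Z, X, Y; rewrite (setC X Y Z).2 (setC X Z Y).1 s2 s1; split=> //; lia.
- by exists Y, X, Z; rewrite (setC X Y Z).1 s1; split=> //; lia.
- by exists Y, Z, X; rewrite (setC X Y Z).1 (setC Y X Z).2 s1 s2; split=> //; lia.
- by exists Z, Y, X; rewrite (setC X Y Z).2 (setC X Z Y).1 (setC Z X Y).2 s2 s1 s2; split=> //; lia.
Qed.

Lemma blk_le n (X Y : 'I_n) : X <= Y -> blk X <= blk Y.
Proof. exact: leq_div2r. Qed.

Section ClassDecomposition.
Variables (n M : nat) (glo ghi slo shi : nat -> nat).
Hypothesis groups : interval_partition M glo ghi.
Hypothesis cells : interval_partition M slo shi.
Hypothesis cells_in_groups : forall b, b < M -> glo b <= slo b /\ shi b <= ghi b.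
Hypothesis group_sizes : forall b, b < M -> 3 <= ghi b - glo b <= 5.
Hypothesis cell_sizes : forall b, b < M -> 2 <= shi b - slo b <= 3.
Hypothesis blocks_fit : 3 * M <= n.+1.

Variable cls : nat -> nat -> nat -> bool.
Hypothesis cls_triple : forall b1 b2 b3,
  cls b1 b2 b3 -> [&& b1 <= b2 <= b3, b3 < M & not_all_equal b1 b2 b3].
Hypothesis cls_groups : forall c1 c2 c3 b1 b2 b3, cls c1 c2 c3 ->
  b1 <= b2 <= b3 -> not_all_equal b1 b2 b3 ->
  glo c1 <= b1 < ghi c1 -> glo c3 <= b3 < ghi c3 -> cls b1 b2 b3.

Variable H : {set {set 'I_n.+1}}.
Hypothesis H_sorted : forall X Y Z : 'I_n.+1,
  X < Y < Z -> ([set X; Y; Z] \in H) = cls (blk X) (blk Y) (blk Z).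
Hypothesis H_card : forall e, e \in H -> #|e| = 3.

Local Notation own := (owner glo ghi slo shi).

Definition class_pieces : seq piece :=
  undup (flatten [seq [seq own x y z | y <- iota 0 M, z <- [seq z <- iota 0 M | cls x y z]]
                 | x <- iota 0 M]).

Definition class_cycles : seq (9.-tuple 'I_n.+1) :=
  flatten [seq map (lift_cycle n 9 (piece_blocks p)) (piece_base p) | p <- class_pieces].

Lemma mem_class_pieces p :
  p \in class_pieces -> exists c1 c2 c3, cls c1 c2 c3 /\ p = own c1 c2 c3.
Proof.
rewrite mem_undup => /flatten_mapP [x _ /allpairsPdep [y [z [_ + ->]]]].
by rewrite mem_filter => /andP [hc _]; exists x, y, z.
Qed.

Lemma owner_class_pieces b1 b2 b3 : cls b1 b2 b3 -> own b1 b2 b3 \in class_pieces.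
Proof.
move=> hc; have /and3P [hs hM _] := cls_triple hc.
rewrite mem_undup; apply/flatten_mapP; exists b1; first by rewrite mem_iota; lia.
by apply/allpairsPdep; exists b2, b3; rewrite mem_filter hc !mem_iota; split=> //; lia.
Qed.

Lemma class_piece_design p : p \in class_pieces ->
  [/\ uniq (piece_blocks p), all (fun b => b < M) (piece_blocks p) &
      local_design 9 (size (piece_blocks p)) (piece_adm p) (piece_base p)].
Proof.
case/mem_class_pieces => c1 [c2 [c3 [hc ->]]]; have /and3P [hs hM hne] := cls_triple hc.
by have := owner_design groups cells cells_in_groups group_sizes cell_sizes hs hM hne.
Qed.

Lemma class_piece_fit p : p \in class_pieces -> all (fun b => 3 * b + 2 <= n) (piece_blocks p).
Proof. by case/class_piece_design => _ /allP hb _; apply/allP => b /hb; lia. Qed.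

Lemma class_piece_covered p b1 b2 b3 : p \in class_pieces ->
  b1 <= b2 <= b3 -> piece_covers p b1 b2 b3 -> cls b1 b2 b3 /\ own b1 b2 b3 = p.
Proof.
move=> hp hb cov; have [_ /allP hM _] := class_piece_design hp.
have hb3 : b3 < M by case/and4P: cov => _ _ /hM.
case/mem_class_pieces: hp cov => c1 [c2 [c3 [hc ->]]] cov.
have /and3P [hcs hcM hcne] := cls_triple hc.
have hne : not_all_equal b1 b2 b3.
  by apply/negP => /andP [/eqP e12 /eqP e23]; move: cov; rewrite e12 e23 piece_covers_diag.
have [-> [g1 g3]] := owner_covered groups cells cells_in_groups hcs hcM hcne hb hb3 cov.
by split=> //; apply: cls_groups hc hb hne g1 g3.
Qed.

Lemma class_cycle_edges t : t \in class_cycles -> uniq t /\ cyc_edges t \subset H.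
Proof.
case/flatten_mapP => p hp /mapP [c hc ->].
have [u _ d] := class_piece_design hp; have fit := class_piece_fit hp.
split; first exact: (lift_uniq (k:=9) isT u fit d hc).
apply/subsetP => _ /(lift_edge (k:=9) isT u fit d hc) [X [Y [Z [uXYZ -> cov]]]].
have [X' [Y' [Z' [hs -> cov']]]] :=
  sort_triple (F := fun X Y Z : 'I_n.+1 => piece_covers p (blk X) (blk Y) (blk Z))
    (fun _ _ _ => (piece_coversC _ _ _ _).1) (fun _ _ _ => (piece_coversC _ _ _ _).2) uXYZ.
have hb : blk X' <= blk Y' <= blk Z' by rewrite !blk_le //; lia.
have cov2 : piece_covers p (blk X') (blk Y') (blk Z') by rewrite -cov'.
by rewrite H_sorted //; case: (class_piece_covered hp hb cov2).
Qed.

Lemma class_cycle_count e : e \in H -> count (fun t => e \in cyc_edges t) class_cycles = 1.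
Proof.
move=> he; have [x [y [z [u exyz]]]] := card3P (H_card he).
have [X [Y [Z [hs eXYZ _]]]] := sort_triple (F := fun _ _ _ => true)
  (fun _ _ _ => erefl) (fun _ _ _ => erefl) u.
have uXYZ : uniq [:: X; Y; Z] by rewrite /= !inE -!val_eqE /=; lia.
move: he; rewrite exyz eXYZ H_sorted // => hc.
rewrite count_flatten -map_comp.
rewrite (_ : map _ _ = [seq nat_of_bool (piece_covers p (blk X) (blk Y) (blk Z))
                         | p <- class_pieces]); last first.
  apply/eq_in_map => p hp /=; have [up _ d] := class_piece_design hp.
  exact: (count_lift (k := 9) isT up (class_piece_fit hp) d uXYZ).
rewrite sumn_count (eq_in_count (a2 := pred1 (own (blk X) (blk Y) (blk Z)))).
  by rewrite count_uniq_mem ?undup_uniq ?owner_class_pieces.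
have hb : blk X <= blk Y <= blk Z by rewrite !blk_le //; lia.
move=> p hp /=; apply/idP/eqP => [cov|->]; first by case: (class_piece_covered hp hb cov).
have /and3P [hbs hM hne] := cls_triple hc.
by apply: (owner_covers groups cells cells_in_groups).
Qed.

Lemma class_decomposition : cycle_decomp H class_cycles.
Proof. by split; [exact: class_cycle_edges | exact: class_cycle_count]. Qed.
End ClassDecomposition.

(** * Groups and cells of a half *)

Definition group_lo (m b : nat) : nat := 3 * minn (b %/ 3) (m %/ 3).-1.
Definition group_hi (m b : nat) : nat := if b %/ 3 < (m %/ 3).-1 then 3 * (b %/ 3) + 3 else m.

Definition pair_start (m : nat) : nat :=
  if m %% 3 == 1 then m - 4 else if m %% 3 == 2 then m - 2 else m.
Definition cell_lo (m b : nat) : nat :=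
  if b < pair_start m then 3 * (b %/ 3) else pair_start m + 2 * ((b - pair_start m) %/ 2).
Definition cell_hi (m b : nat) : nat :=
  if b < pair_start m then 3 * (b %/ 3) + 3 else cell_lo m b + 2.

Section Half.
Variable m : nat.
Hypothesis m_ge3 : 3 <= m.

Lemma group_partition : interval_partition m (group_lo m) (group_hi m).
Proof.
move=> b hb; rewrite /group_lo /group_hi; split; first (by case: ifP; lia); first by case: ifP; lia.
by move=> x; case: ifP => h1; case: ifP => h2; lia.
Qed.

Lemma pair_startP : [/\ pair_start m <= m, pair_start m %% 3 = 0, (m - pair_start m) %% 2 = 0
                       & 3 * (m %/ 3).-1 <= pair_start m].
Proof. by rewrite /pair_start; repeat case: ifP => ?; split; lia. Qed.

Lemma cell_partition : interval_partition m (cell_lo m) (cell_hi m).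
Proof.
move=> b hb; rewrite /cell_hi /cell_lo; have := pair_startP.
move: (pair_start m) => s [? ? ? _]; split; first (by case: ifP => ?; lia).
  by repeat case: ifP => ?; lia.
by move=> x; repeat case: ifP => ?; lia.
Qed.

Lemma cell_in_group b : b < m -> group_lo m b <= cell_lo m b /\ cell_hi m b <= group_hi m b.
Proof.
rewrite /group_lo /group_hi /cell_hi /cell_lo => hb; have := pair_startP.
by move: (pair_start m) => s [? ? ? ?]; repeat case: ifP => ?; lia.
Qed.

Lemma group_size b : b < m -> 3 <= group_hi m b - group_lo m b <= 5.
Proof. by rewrite /group_lo /group_hi => hb; case: ifP => ?; lia. Qed.

Lemma cell_size b : b < m -> 2 <= cell_hi m b - cell_lo m b <= 3.
Proof. by rewrite /cell_hi /cell_lo => hb; repeat case: ifP => ?; lia. Qed.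
End Half.

(** * The 2-split decomposition *)

Definition is_cut (M : nat) (lo hi : nat -> nat) (c : nat) : Prop :=
  forall b, b < M -> (b < c -> hi b <= c) /\ (c <= b -> c <= lo b).

Lemma cut0 M lo hi : is_cut M lo hi 0.
Proof. by []. Qed.

Lemma cut_top M lo hi : interval_partition M lo hi -> is_cut M lo hi M.
Proof. by move=> ip b hb; have [_ ? _] := ip b hb; split=> //; lia. Qed.

Definition twice (m : nat) (f : nat -> nat) (b : nat) : nat :=
  if b < m then f b else m + f (b - m).

Lemma interval_partition_twice m lo hi :
  interval_partition m lo hi -> interval_partition (2 * m) (twice m lo) (twice m hi).
Proof.
move=> ip b hb; rewrite /twice; case: ltnP => hbm.
  have [? ? eqb] := ip b hbm; split=> // [|x hx]; first by lia.
  have -> : x < m by lia.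
  exact: eqb.
have [? ? eqb] := ip (b - m) ltac:(lia); split=> [||x hx]; try lia.
have -> : x < m = false by apply/negbTE; rewrite -leqNgt; lia.
by have [-> ->] := eqb (x - m) ltac:(lia).
Qed.

Lemma twice_cut m lo hi : interval_partition m lo hi -> is_cut (2 * m) (twice m lo) (twice m hi) m.
Proof.
move=> ip b hb; rewrite /twice; case: ltnP => hbm; split=> //; try lia.
by have [_ ? _] := ip b hbm.
Qed.

Definition within (lo hi b1 b2 b3 : nat) : bool :=
  [&& b1 <= b2 <= b3, lo <= b1, b3 < hi & not_all_equal b1 b2 b3].

Definition straddling (c hi b1 b2 b3 : nat) : bool :=
  [&& b1 <= b2 <= b3, b1 < c, c <= b3 & b3 < hi].

Section Classes.
Variables (M : nat) (glo ghi : nat -> nat).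

Lemma within_groups lo hi c1 c2 c3 b1 b2 b3 :
  is_cut M glo ghi lo -> is_cut M glo ghi hi -> hi <= M ->
  within lo hi c1 c2 c3 -> b1 <= b2 <= b3 -> not_all_equal b1 b2 b3 ->
  glo c1 <= b1 < ghi c1 -> glo c3 <= b3 < ghi c3 -> within lo hi b1 b2 b3.
Proof.
move=> clo chi hiM /and4P [hc hlo hhi _] hb hne hb1 hb3.
have [_ /(_ hlo)] := clo c1 ltac:(lia); have [/(_ hhi) ? _] := chi c3 ltac:(lia).
by rewrite /within hb hne /=; lia.
Qed.

Lemma straddling_groups c c1 c2 c3 b1 b2 b3 :
  interval_partition M glo ghi -> is_cut M glo ghi c ->
  straddling c M c1 c2 c3 -> b1 <= b2 <= b3 ->
  glo c1 <= b1 < ghi c1 -> glo c3 <= b3 < ghi c3 -> straddling c M b1 b2 b3.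
Proof.
move=> ip cc /and4P [hc h1 h3 hM] hb hb1 hb3.
have [/(_ h1) ? _] := cc c1 ltac:(lia); have [_ /(_ h3) ?] := cc c3 hM.
have [_ ? _] := ip c3 hM.
by rewrite /straddling hb /=; lia.
Qed.
End Classes.

Definition block_range n (lo hi : nat) : {set 'I_n} := [set x | lo <= blk x < hi].
Definition block_factor n (lo hi : nat) : {set {set 'I_n}} :=
  preim_partition (@blk n) (block_range n lo hi).

Lemma card_set3 (T : finType) (x y z : T) : uniq [:: x; y; z] -> #|[set x; y; z]| = 3.
Proof.
rewrite /= !inE negb_or => /and3P [/andP [nxy nxz] nyz _].
have -> : [set x; y; z] = x |: (y |: [set z]) by apply/setP => w; rewrite !inE orbA.
by rewrite !cardsU1 cards1 !inE negb_or nxy nxz nyz.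
Qed.

Lemma mem_complete3 (T : finType) (V : {set T}) x y z : uniq [:: x; y; z] ->
  ([set x; y; z] \in complete3 V) = [&& x \in V, y \in V & z \in V].
Proof.
by move=> u; rewrite inE card_set3 // eqxx andbT !subUset !sub1set andbA.
Qed.

Section Blocks.
Variable n : nat.

Lemma card_block (x : 'I_n.+1) : 3 * blk x + 2 <= n -> #|[set y : 'I_n.+1 | blk y == blk x]| = 3.
Proof.
move=> hx; pose y i : 'I_n.+1 := inord (3 * blk x + i).
have yE i : i < 3 -> y i = 3 * blk x + i :> nat by move=> hi; rewrite inordK //; lia.
have -> : [set w : 'I_n.+1 | blk w == blk x] = [set y 0; y 1; y 2].
  apply/setP => w; rewrite !inE -!val_eqE /= !yE // /blk; apply/idP/idP; lia.
by apply: card_set3; rewrite /= !inE -!val_eqE /= !yE //; lia.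
Qed.

Lemma block_class lo hi (x : 'I_n.+1) : x \in block_range n.+1 lo hi ->
  [set y in block_range n.+1 lo hi | blk x == blk y] = [set y | blk y == blk x].
Proof.
move=> hx; apply/setP => y; rewrite !inE eq_sym; apply/andP/idP => [[] //|/eqP ->].
by split=> //; move: hx; rewrite inE.
Qed.

Lemma block_factor_one_factor lo hi : 3 * hi <= n.+1 ->
  one_factor (block_range n.+1 lo hi) (block_factor n.+1 lo hi).
Proof.
move=> hhi; split; first exact: preim_partitionP.
move=> t /imsetP [x hx ->]; rewrite block_class //.
by apply: card_block; move: hx; rewrite inE /blk; lia.
Qed.

Lemma mem_block_factor lo hi (X Y Z : 'I_n.+1) : 3 * hi <= n.+1 ->
  uniq [:: X; Y; Z] -> X \in block_range n.+1 lo hi ->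
  ([set X; Y; Z] \in block_factor n.+1 lo hi) = (blk X == blk Y) && (blk Y == blk Z).
Proof.
move=> hhi u hX; apply/imsetP/andP => [[x hx E]|[/eqP eXY /eqP eYZ]].
  have bx w : w \in [set X; Y; Z] -> blk w = blk x by rewrite E inE => /andP [_ /eqP].
  by rewrite !bx ?inE ?eqxx ?orbT.
exists X => //; rewrite block_class //; apply/eqP; rewrite eqEcard card_set3 //.
rewrite card_block; last by move: hX; rewrite inE /blk; lia.
by rewrite andbT; apply/subsetP => w; rewrite !inE -orbA => /or3P [] /eqP ->; rewrite ?eXY ?eYZ.
Qed.
End Blocks.

Lemma mem_block_range n lo hi (x : 'I_n) : (x \in block_range n lo hi) = (lo <= blk x < hi).
Proof. by rewrite inE. Qed.

Lemma setI3_neq0 (T : finType) (A : {set T}) x y z :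
  ([set x; y; z] :&: A != set0) = [|| x \in A, y \in A | z \in A].
Proof.
apply/set0Pn/idP => [[w]|].
  by rewrite !inE -orbA => /andP [/or3P [] /eqP -> ->]; rewrite ?orbT.
by case/or3P => h; [exists x | exists y | exists z]; rewrite !inE eqxx ?orbT h.
Qed.

Lemma card_lt_ord N k : k <= N -> #|[set x : 'I_N | x < k]| = k.
Proof.
move=> hk; have -> : [set x : 'I_N | x < k] = widen_ord hk @: [set: 'I_k].
  apply/setP => x; rewrite inE; apply/idP/imsetP => [hx|[i _ ->]]; last by rewrite /= ltn_ord.
  by exists (Ordinal hx) => //; apply: val_inj.
by rewrite card_imset ?cardsT ?card_ord // => i j /(congr1 val) E; apply: val_inj.
Qed.

Section TwoSplit.
Variables (n m : nat).
Hypothesis n_eq : n.+1 = 6 * m.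
Hypothesis m_ge3 : 3 <= m.

Local Notation glo := (twice m (group_lo m)).
Local Notation ghi := (twice m (group_hi m)).
Local Notation slo := (twice m (cell_lo m)).
Local Notation shi := (twice m (cell_hi m)).

Lemma group_partition2 : interval_partition (2 * m) glo ghi.
Proof. exact/interval_partition_twice/group_partition. Qed.

Lemma cell_partition2 : interval_partition (2 * m) slo shi.
Proof. exact/interval_partition_twice/cell_partition. Qed.

Lemma cell_in_group2 b : b < 2 * m -> glo b <= slo b /\ shi b <= ghi b.
Proof.
rewrite /twice => hb; case: (ltnP b m) => hbm; first exact: cell_in_group.
have hb' : b - m < m by lia.
by have [? ?] := cell_in_group m_ge3 hb'; split; lia.
Qed.

Lemma group_size2 b : b < 2 * m -> 3 <= ghi b - glo b <= 5.
Proof.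
rewrite /twice => hb; case: (ltnP b m) => hbm /=; first exact: group_size.
have hb' : b - m < m by lia.
by have := group_size m_ge3 hb'; lia.
Qed.

Lemma cell_size2 b : b < 2 * m -> 2 <= shi b - slo b <= 3.
Proof.
rewrite /twice => hb; case: (ltnP b m) => hbm /=; first exact: cell_size.
have hb' : b - m < m by lia.
by have := cell_size m_ge3 hb'; lia.
Qed.

Lemma blocks_fit : 3 * (2 * m) <= n.+1.
Proof. by rewrite n_eq; lia. Qed.

Lemma blk_lt (X : 'I_n.+1) : blk X < 2 * m.
Proof. by have := ltn_ord X; rewrite /blk; lia. Qed.

Local Notation cycles_of cls :=
  (class_cycles n (2 * m) glo ghi slo shi cls).

Lemma within_decomposition lo hi : is_cut (2 * m) glo ghi lo -> is_cut (2 * m) glo ghi hi ->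
  hi <= 2 * m ->
  cycle_decomp (complete3 (block_range n.+1 lo hi) :\: block_factor n.+1 lo hi)
               (cycles_of (within lo hi)).
Proof.
move=> clo chi hiM.
apply: (class_decomposition group_partition2 cell_partition2 cell_in_group2
         group_size2 cell_size2 blocks_fit).
- by move=> b1 b2 b3 /and4P [-> ? ? ->]; rewrite andbT; lia.
- by move=> c1 c2 c3 b1 b2 b3; exact: within_groups clo chi hiM.
- move=> X Y Z hs; have u : uniq [:: X; Y; Z] by rewrite /= !inE -!val_eqE /=; lia.
  have hb : blk X <= blk Y <= blk Z by rewrite !blk_le //; lia.
  rewrite in_setD mem_complete3 // !mem_block_range /within hb /not_all_equal /=.
  have [hX|hX] := boolP (lo <= blk X < hi); last by rewrite !andbF; apply/esym/negbTE; lia.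
  rewrite mem_block_factor ?mem_block_range //; last by lia.
  by apply/idP/idP; lia.
- by move=> e /setDP [/setIdP [_ /eqP]].
Qed.

Local Notation V1 := (block_range n.+1 0 m).
Local Notation V2 := (block_range n.+1 m (2 * m)).

Lemma straddling_decomposition :
  cycle_decomp (cross3 V1 V2) (cycles_of (straddling m (2 * m))).
Proof.
apply: (class_decomposition group_partition2 cell_partition2 cell_in_group2
         group_size2 cell_size2 blocks_fit).
- by move=> b1 b2 b3 /and4P [-> ? ? ?] /=; rewrite /not_all_equal; lia.
- by move=> c1 c2 c3 b1 b2 b3 hc hb _; apply: straddling_groups group_partition2
    (twice_cut (group_partition m_ge3)) hc hb.
- move=> X Y Z hs; have u : uniq [:: X; Y; Z] by rewrite /= !inE -!val_eqE /=; lia.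
  have hb : blk X <= blk Y <= blk Z by rewrite !blk_le //; lia.
  rewrite inE card_set3 // !setI3_neq0 !mem_block_range /straddling hb (blk_lt Z) /=.
  by apply/idP/idP; lia.
- by move=> e; rewrite inE => /and3P [/eqP].
Qed.

Lemma two_split_decomp_6m : two_split_decomp n.+1 9.
Proof.
have cut_m := twice_cut (group_partition m_ge3).
have cut_top := cut_top group_partition2.
have V2E : V2 = ~: V1 by apply/setP => x; rewrite !inE (blk_lt x) andbT -leqNgt.
have cardV1 : #|V1| = 3 * m.
  rewrite -(card_lt_ord (N := n.+1) (k := 3 * m)); last by rewrite n_eq; lia.
  by apply: eq_card => x; rewrite !inE /blk; apply/idP/idP; lia.
have cardV2 : #|V2| = 3 * m.
  by have := cardsC V1; rewrite -V2E cardV1 card_ord n_eq; lia.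
exists V1, V2, (block_factor n.+1 0 m), (block_factor n.+1 m (2 * m)),
  (cycles_of (within 0 m)), (cycles_of (within m (2 * m))), (cycles_of (straddling m (2 * m))).
split.
- by rewrite cardV1 cardV2 V2E setICr setUCr n_eq; split=> //; lia.
- by apply: block_factor_one_factor; rewrite n_eq; lia.
- by apply: block_factor_one_factor; rewrite n_eq; lia.
split; last exact: straddling_decomposition.
- by apply: within_decomposition; [exact: cut0 | exact: cut_m | lia].
- by apply: within_decomposition; [exact: cut_m | exact: cut_top | lia].
Qed.
End TwoSplit.

Theorem theorem14 (v : nat) : 6 %| v -> 18 <= v -> two_split_decomp v 9.
Proof.
case/dvdnP => m -> h18; have -> : m * 6 = (6 * m).-1.+1 by lia.
by apply: (@two_split_decomp_6m _ m); lia.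
Qed.
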